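(* Let $M:\alpha\mapsto M_\alpha$ be a matroid flock on a finite set $E$, and let $\alpha,\beta\in\mathbb{Z}^E$. If $M_\alpha=M_\beta$, then there is a walk $\gamma^0,\ldots,\gamma^k\in\mathbb{Z}^E$ from $\alpha=\gamma^0$ to $\beta=\gamma^k$ such that $M_{\gamma^i}=M_\alpha$ for $i=0,\ldots,k$, and for each $i\in\{1,\ldots,k\}$ there is a set $J_i\subseteq E$ with $\gamma^i-\gamma^{i-1}=\pm e_{J_i}$.
   Context: $e_J:=\sum_{i\in J}e_i$ ($e_i$ unit vectors), $\mathbf{1}:=e_E$. A matroid flock of rank $d$ on $E$ is a map $M$ assigning to each $\alpha\in\mathbb{Z}^E$ a matroid $M_\alpha$ on $E$ of rank $d$ with (MF1) $M_\alpha/i=M_{\alpha+e_i}\setminus i$ for all $\alpha\in\mathbb{Z}^E$, $i\in E$ (contraction, deletion); and (MF2) $M_\alpha=M_{\alpha+\mathbf{1}}$ for all $\alpha$. *)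

From mathcomp Require Import all_boot all_order all_algebra.
Set Implicit Arguments. Unset Strict Implicit. Unset Printing Implicit Defensive.
Import GRing.Theory.
Local Open Scope ring_scope.

Definition is_matroid (E : finType) (B : {set {set E}}) : Prop :=
  B != set0 /\
  forall B1 B2, B1 \in B -> B2 \in B -> forall x, x \in B1 :\: B2 ->
    exists2 y, y \in B2 :\: B1 & (y |: (B1 :\ x)) \in B.

Definition is_matroid_rank (E : finType) (d : nat) (B : {set {set E}}) : Prop :=
  is_matroid B /\ forall X, X \in B -> #|X| = d.

(* Deletion M \ i, a matroid on E - i (bases are subsets of E avoiding i). *)
Definition mdelete (E : finType) (B : {set {set E}}) (i : E) : {set {set E}} :=
  if [exists X in B, i \notin X] then [set X in B | i \notin X]
  else [set X :\ i | X in B].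

Definition mcontract (E : finType) (B : {set {set E}}) (i : E) : {set {set E}} :=
  if [exists X in B, i \in X] then [set X :\ i | X in B & i \in X]
  else B.

Definition unitv (E : finType) (i : E) : {ffun E -> int} :=
  [ffun j => (j == i)%:R].
Definition indv (E : finType) (J : {set E}) : {ffun E -> int} :=
  [ffun j => (j \in J)%:R].

Definition is_matroid_flock (E : finType) (d : nat)
    (M : {ffun E -> int} -> {set {set E}}) : Prop :=
  (forall a, is_matroid_rank d (M a)) /\
  (forall a i, mcontract (M a) i = mdelete (M (a + unitv i)) i) /\
  (forall a, M a = M (a + indv [set: E])).

(* Write r_g for the rank function of M_g.  Contracting or deleting one element at a time,
   (MF1) makes r_g(X) grow when g increases on X and shrink when g increases off X; with (MF2)
   this gives r_g(X) <= r_g'(X) whenever g' - g is larger on X than off X.  Iterating (MF1)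
   over J also shows that M_(g + e_J) restricted to E - J is the contraction M_g / J.
   Now let M_a = M_b and let J be the set where b - a attains its maximum R.  Comparing
   a + e_J with a and with b by monotonicity, M_a and M_(a + e_J) have the same rank on every
   subset of J and on E - J; by the contraction identity J is then a separator of both, so
   their rank functions, hence the matroids, coincide.  The step a -> a + e_J shortens the
   l1 distance to b (symmetrically, step from b when b - a has no positive entry), so
   induction on that distance produces the walk. *)

From mathcomp Require Import all_boot all_order all_algebra.
From mathcomp Require Import zify.

Set Implicit Arguments. Unset Strict Implicit. Unset Printing Implicit Defensive.

Lemma cardsU1I (E : finType) (A X : {set E}) y :
  y \notin A -> #|(y |: A) :&: X| = (y \in X) + #|A :&: X|.
Proof.
move=> Ay; rewrite setIUl; have [Xy | Xy] := boolP (y \in X).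
  by rewrite (setIidPl (_ : [set y] \subset X)) ?sub1set // cardsU1 inE (negbTE Ay).
rewrite (_ : [set y] :&: X = set0) ?set0U //.
by apply/setP => z; rewrite !inE; case: eqP => // ->; rewrite (negbTE Xy).
Qed.

Lemma cardsID1 (E : finType) (A X : {set E}) x :
  #|A :&: X| = (x \in A :&: X) + #|(A :\ x) :&: X|.
Proof. by rewrite (cardsD1 x) setIDAC. Qed.

Lemma card_exchange (E : finType) (A X : {set E}) x y :
  (x \in X -> y \in X) -> y \notin A -> #|A :&: X| <= #|(y |: (A :\ x)) :&: X|.
Proof.
move=> xXyX Ay; rewrite cardsU1I ?inE ?(negbTE Ay) ?andbF // (cardsID1 A _ x) leq_add2r.
by rewrite inE; case: (x \in A) (x \in X) xXyX => [] [] //= ->.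
Qed.

Section RankFunction.

Variables (E : finType) (N : {set {set E}}).

Definition mrank (X : {set E}) : nat := \max_(B in N) #|B :&: X|.

Lemma leq_card_mrank X B : B \in N -> #|B :&: X| <= mrank X.
Proof. by move=> NB; apply: (leq_bigmax_cond _ NB). Qed.

Lemma mrank_le X m : (forall B, B \in N -> #|B :&: X| <= m) -> mrank X <= m.
Proof. by move/bigmax_leqP. Qed.

Lemma mrank_witness X : N != set0 -> exists2 B, B \in N & mrank X = #|B :&: X|.
Proof.
by rewrite -card_gt0 => /(eq_bigmax_cond (fun B => #|B :&: X|)) [B NB eqB]; exists B.
Qed.

Lemma mrank0 : mrank set0 = 0.
Proof. by apply/eqP; rewrite -leqn0; apply: mrank_le => B _; rewrite setI0 cards0. Qed.

Lemma mrankU X Y : mrank (X :|: Y) <= mrank X + mrank Y.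
Proof.
apply: mrank_le => B NB; rewrite setIUr (leq_trans (leq_card_setU _ _)) //.
by rewrite leq_add ?leq_card_mrank.
Qed.

Lemma mrank_id B : B \in N -> mrank B = #|B|.
Proof.
move=> NB; apply/eqP; rewrite eqn_leq; apply/andP; split.
  by apply: mrank_le => B' _; rewrite subset_leq_card ?subsetIr.
by rewrite -{1}(setIid B) leq_card_mrank.
Qed.

Lemma mrank1 i : mrank [set i] = nat_of_bool [exists B in N, i \in B].
Proof.
have cardBi B : #|B :&: [set i]| = nat_of_bool (i \in B).
  by rewrite setIC -(setU0 [set i]) cardsU1I ?inE // set0I cards0 addn0.
apply/eqP; rewrite eqn_leq; apply/andP; split.
  apply: mrank_le => B NB; rewrite cardBi; case: (boolP (i \in B)) => //= Bi.
  by rewrite lt0b; apply/exists_inP; exists B.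
case: exists_inP => [[B NB Bi] | //].
by rewrite (leq_trans _ (leq_card_mrank _ NB)) // cardBi Bi.
Qed.

Definition separator (J : {set E}) := mrank J + mrank (~: J) = mrank setT.

Lemma separatorC J : separator J -> separator (~: J).
Proof. by rewrite /separator setCK addnC. Qed.

End RankFunction.

Lemma leq_mrank_subset (E : finType) (N N' : {set {set E}}) X :
  {subset N <= N'} -> mrank N X <= mrank N' X.
Proof. by move=> sNN'; apply: mrank_le => B /sNN'; apply: leq_card_mrank. Qed.

Section Matroid.

Variables (E : finType) (d : nat) (N : {set {set E}}).
Hypothesis matN : is_matroid_rank d N.

Lemma card_basis B : B \in N -> #|B| = d.
Proof. by case: matN => _; apply. Qed.

Lemma bases_neq0 : N != set0.
Proof. by case: matN => -[]. Qed.

Lemma basis_exchange B1 B2 x : B1 \in N -> B2 \in N -> x \in B1 :\: B2 ->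
  exists2 y, y \in B2 :\: B1 & y |: (B1 :\ x) \in N.
Proof. by case: matN => -[_ exN] _ NB1 NB2; apply: exN. Qed.

Lemma basis_exchange_in B1 B2 y : B1 \in N -> B2 \in N -> y \in B2 :\: B1 ->
  exists2 x, x \in B1 :\: B2 & y |: (B1 :\ x) \in N.
Proof.
have [n] := ubnP #|B2 :\: B1|; elim: n B2 => // n IH B2 ltB2n NB1 NB2 B21y.
have [/exists_inP[z B21z zy] | /exists_inPn onlyy] := boolP [exists z in B2 :\: B1, z != y].
  have [w B12w NB2'] := basis_exchange NB2 NB1 B21z.
  have sub21 : B2 :\: B1 :\ z = (w |: (B2 :\ z)) :\: B1.
    apply/setP => u; rewrite !inE; case: (u =P w) => [->|_] /=; last by rewrite andbCA.
    by move: B12w; rewrite !inE => /andP[_ ->]; rewrite andbF.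
  have [||x B12x NB] := IH (w |: (B2 :\ z)) _ NB1 NB2'.
  - by rewrite -sub21; rewrite (cardsD1 z) B21z in ltB2n.
  - by rewrite -sub21 !inE eq_sym zy -in_setD.
  exists x => //; move: B12x B21z; rewrite !inE negb_or negb_and negbK.
  case/andP=> /andP[_ /orP[/eqP-> | ->]] xB1 /andP[zB1 _]; last by rewrite xB1.
  by rewrite xB1 in zB1.
have [x B12x] : exists x, x \in B1 :\: B2.
  apply/card_gt0P; have: 0 < #|B2 :\: B1| by apply/card_gt0P; exists y.
  have := cardsID B2 B1; have := cardsID B1 B2.
  by rewrite setIC (card_basis NB1) (card_basis NB2); lia.
have [y' B21y' NB] := basis_exchange NB1 NB2 B12x.
by exists x; rewrite // -(eqP (negbNE (onlyy _ B21y'))).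
Qed.

Lemma mrankT : mrank N setT = d.
Proof.
have [B NB ->] := mrank_witness setT bases_neq0.
by rewrite setIT card_basis.
Qed.

Lemma exists_basis_in_mrank (X C : {set E}) i : i \in X -> C \in N -> i \in C ->
  exists2 B, B \in N & (i \in B) && (mrank N X <= #|B :&: X|).
Proof.
move=> Xi NC Ci; have [B0 NB0 ->] := mrank_witness X bases_neq0.
have [B0i | B0'i] := boolP (i \in B0); first by exists B0; rewrite ?B0i ?leqnn.
have [|x _ NB] := basis_exchange_in NB0 NC (y := i); first by rewrite inE B0'i.
by exists (i |: (B0 :\ x)); rewrite // setU11 card_exchange.
Qed.

Lemma exists_basis_notin_mrank (X C : {set E}) i : i \notin X -> C \in N -> i \notin C ->
  exists2 B, B \in N & (i \notin B) && (mrank N X <= #|B :&: X|).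
Proof.
move=> X'i NC C'i; have [B0 NB0 ->] := mrank_witness X bases_neq0.
have [B0i | B0'i] := boolP (i \in B0); last by exists B0; rewrite ?B0'i ?leqnn.
have [|y /setDP[Cy B0'y] NB] := basis_exchange NB0 NC (x := i); first by rewrite inE C'i.
exists (y |: (B0 :\ i)) => //; rewrite card_exchange ?(negbTE X'i) // andbT.
by rewrite !inE eqxx /= orbF; apply: contraNneq C'i => ->.
Qed.

Lemma separator_cardI (J B : {set E}) : separator N J -> B \in N -> #|B :&: J| = mrank N J.
Proof.
move=> sepJ NB; have := cardsID J B; rewrite setDE (card_basis NB) -mrankT -sepJ.
by have := leq_card_mrank J NB; have := leq_card_mrank (~: J) NB; lia.
Qed.

Lemma separator_glue (J B1 B2 : {set E}) : separator N J -> B1 \in N -> B2 \in N ->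
  exists2 B, B \in N & B :&: J = B1 :&: J /\ B :\: J = B2 :\: J.
Proof.
move=> sepJ; have sepJC := separatorC sepJ.
have [n] := ubnP #|(B1 :\: B2) :\: J|; elim: n B1 => // n IH B1 ltB1n NB1 NB2.
have [B12J | [x B12x]] := set_0Vmem ((B1 :\: B2) :\: J).
  exists B1 => //; split=> //; apply/eqP; rewrite eqEcard !setDE.
  rewrite !separator_cardI ?leqnn ?andbT //; apply/subsetP=> u; rewrite !inE.
  case/andP=> B1u J'u; rewrite J'u andbT; apply/negPn/negP => B2'u.
  by have /setP/(_ u) := B12J; rewrite !inE B2'u B1u J'u.
move: (B12x); rewrite !inE => /andP[J'x /andP[B2'x B1x]].
have [|y /setDP[B2y B1'y] NB1'] := basis_exchange NB1 NB2 (x := x).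
  by rewrite inE B1x B2'x.
have J'y : y \notin J.
  have := separator_cardI sepJC NB1'.
  rewrite cardsU1I; last by rewrite !inE (negbTE B1'y) andbF.
  rewrite -(separator_cardI sepJC NB1) (cardsID1 B1 _ x) !inE J'x B1x.
  by case: (y \in J) => /=; lia.
have [|B NB [BJ BJ']] := IH (y |: (B1 :\ x)) _ NB1' NB2.
  rewrite (cardsD1 x) B12x in ltB1n.
  suff /subset_leq_card : (y |: (B1 :\ x)) :\: B2 :\: J \subset (B1 :\: B2 :\: J) :\ x.
    by lia.
  apply/subsetP=> u; rewrite !inE.
  case: (u =P y) => [-> | _]; first by rewrite B2y !andbF.
  by case/and3P=> -> -> /andP[-> ->].
exists B => //; split=> //; rewrite BJ; apply/setP=> u; rewrite !inE.
have [-> | _] := eqVneq u y; first by rewrite (negbTE J'y) !andbF.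
by have [-> | _] := eqVneq u x; rewrite ?(negbTE J'x) ?andbF.
Qed.

Lemma mrank_separatorU (J Y Z : {set E}) : separator N J ->
  Y \subset ~: J -> Z \subset J -> mrank N (Y :|: Z) = mrank N Y + mrank N Z.
Proof.
move=> sepJ sYJ' sZJ; apply/eqP; rewrite eqn_leq mrankU /=.
have [B1 NB1 ->] := mrank_witness Z bases_neq0.
have [B2 NB2 ->] := mrank_witness Y bases_neq0.
have [B NB [BJ BJ']] := separator_glue sepJ NB1 NB2.
have BZ : B :&: Z = B1 :&: Z by rewrite -(setIidPr sZJ) !setIA BJ.
have BY : B :&: Y = B2 :&: Y by rewrite -(setIidPr sYJ') !setIA -!setDE BJ'.
have disjYZ : [disjoint B :&: Y & B :&: Z].
  by rewrite (disjointW (subsetIr _ _) (subsetIr _ _)) // (disjointWr sZJ) ?disjoints_subset.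
apply: leq_trans (leq_card_mrank _ NB).
by rewrite setIUr cardsU (disjoint_setI0 disjYZ) cards0 subn0 BY BZ addnC.
Qed.

End Matroid.

Lemma mrank_inj (E : finType) d (N N' : {set {set E}}) :
  is_matroid_rank d N -> is_matroid_rank d N' -> mrank N =1 mrank N' -> N = N'.
Proof.
suff sub_bases (N1 N2 : {set {set E}}) : is_matroid_rank d N1 -> is_matroid_rank d N2 ->
    mrank N1 =1 mrank N2 -> {subset N1 <= N2}.
  move=> matN matN' eqr; apply/setP => B.
  by apply/idP/idP; apply: sub_bases => // X; rewrite eqr.
move=> matN1 matN2 eqr B N1B.
have [B' N2B' rkB] := mrank_witness B (bases_neq0 matN2).
rewrite -eqr mrank_id // in rkB.
have BB' : B' :&: B = B by apply/eqP; rewrite eqEcard subsetIr -rkB leqnn.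
suff -> : B = B' by [].
apply/eqP; rewrite eqEcard -BB' subsetIl /= BB'.
by rewrite (card_basis matN1 N1B) (card_basis matN2 N2B').
Qed.

Lemma basis_neq_setD1 (E : finType) d (N1 N2 : {set {set E}}) B X i :
  is_matroid_rank d N1 -> is_matroid_rank d N2 -> B \in N1 -> X \in N2 -> i \in X ->
  B != X :\ i.
Proof.
move=> matN1 matN2 N1B N2X Xi; apply/eqP => BX.
by move: (card_basis matN2 N2X); rewrite (cardsD1 i) Xi -BX (card_basis matN1 N1B); lia.
Qed.

Lemma imset_setD1K (E : finType) (P : {set {set E}}) (i : E) :
  {in P, forall X : {set E}, i \in X} ->
  [set i |: Y | Y in [set X :\ i | X in P]] = P.
Proof.
by move=> Pi; rewrite -imset_comp -[RHS]imset_id; apply: eq_in_imset => X /Pi /setD1K.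
Qed.

Section ContractionDeletion.

Variables (E : finType) (d : nat) (N N' : {set {set E}}) (i : E).
Hypotheses (matN : is_matroid_rank d N) (matN' : is_matroid_rank d N').
Hypothesis contract_delete : mcontract N i = mdelete N' i.

Lemma contract_delete_nonloop : [exists B in N, i \in B] -> N' = [set B in N | i \in B].
Proof.
move=> exN; move: contract_delete; rewrite /mcontract /mdelete exN.
case: ifP => [/exists_inP[X N'X X'i] | /negbT/exists_inPn N'i] eqCD.
  have: X \in [set X :\ i | X in N & i \in X] by rewrite eqCD inE N'X X'i.
  case/imsetP => Y; rewrite inE => /andP[NY Yi] XY.
  by have := basis_neq_setD1 matN' matN N'X NY Yi; rewrite XY eqxx.
have {}N'i : {in N', forall X : {set E}, i \in X} by move=> X /N'i /negbNE.
rewrite -[LHS](imset_setD1K N'i) -eqCD imset_setD1K //.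
by move=> X; rewrite inE => /andP[].
Qed.

Lemma contract_delete_loop : ~~ [exists B in N, i \in B] -> N = [set B in N' | i \notin B].
Proof.
move=> /negbTE exN; move: contract_delete; rewrite /mcontract /mdelete exN.
case: ifP => // /negbT/exists_inPn N'i eqCD.
have /set0Pn[B NB] := bases_neq0 matN.
have: B \in [set X :\ i | X in N'] by rewrite -eqCD.
case/imsetP => X N'X BX.
by have := basis_neq_setD1 matN matN' NB N'X (negbNE (N'i X N'X)); rewrite BX eqxx.
Qed.

Lemma mrank_contract_delete_in (X : {set E}) : i \in X -> mrank N X <= mrank N' X.
Proof.
move=> Xi; have [exN | loop] := boolP [exists B in N, i \in B].
  have /exists_inP[C NC Ci] := exN.
  have [B NB /andP[Bi le]] := exists_basis_in_mrank matN Xi NC Ci.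
  by rewrite (leq_trans le) // leq_card_mrank // (contract_delete_nonloop exN) inE NB.
rewrite (contract_delete_loop loop).
by apply: leq_mrank_subset => B; rewrite inE => /andP[].
Qed.

Lemma mrank_contract_delete_notin (X : {set E}) : i \notin X -> mrank N' X <= mrank N X.
Proof.
move=> X'i; have [exN | loop] := boolP [exists B in N, i \in B].
  rewrite (contract_delete_nonloop exN).
  by apply: leq_mrank_subset => B; rewrite inE => /andP[].
have /set0Pn[C NC] := bases_neq0 matN.
move: NC; rewrite (contract_delete_loop loop) inE => /andP[N'C C'i].
have [B N'B /andP[B'i le]] := exists_basis_notin_mrank matN' X'i N'C C'i.
by rewrite (leq_trans le) // leq_card_mrank // inE N'B.
Qed.

Lemma mrank_contract_delete_setU1 (Y : {set E}) : i \notin Y ->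
  mrank N' Y + mrank N [set i] = mrank N (i |: Y).
Proof.
move=> Y'i; have cardIU1 B : #|B :&: (i |: Y)| = (i \in B) + #|B :&: Y|.
  by rewrite setIC cardsU1I // setIC.
rewrite mrank1; have [exN | loop] := boolP [exists B in N, i \in B].
  have /exists_inP[C NC Ci] := exN; have N'E := contract_delete_nonloop exN.
  apply/eqP; rewrite eqn_leq; apply/andP; split.
    have [B] := mrank_witness Y (bases_neq0 matN').
    rewrite {1}N'E inE => /andP[NB Bi] ->.
    by rewrite (leq_trans _ (leq_card_mrank _ NB)) // cardIU1 Bi addnC.
  have [B NB /andP[Bi le]] := exists_basis_in_mrank matN (setU11 i Y) NC Ci.
  by rewrite (leq_trans le) // cardIU1 Bi addnC leq_add2r leq_card_mrank // N'E inE NB.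
have -> : mrank N (i |: Y) = mrank N Y.
  have /exists_inPn N'i := loop.
  by apply: eq_bigr => B /N'i B'i; rewrite cardIU1 (negbTE B'i).
apply/eqP; rewrite addn0 eqn_leq mrank_contract_delete_notin //=.
rewrite {1}(contract_delete_loop loop).
by apply: leq_mrank_subset => B; rewrite inE => /andP[].
Qed.

End ContractionDeletion.

Import GRing.Theory Order.TTheory.
Local Open Scope ring_scope.

Definition indv_step (E : finType) (u : {ffun E -> int}) : Prop :=
  exists J : {set E}, u = indv J \/ u = - indv J.

Definition flock_walk (E : finType) (M : {ffun E -> int} -> {set {set E}})
    (a b : {ffun E -> int}) : Prop :=
  exists (k : nat) (gamma : nat -> {ffun E -> int}),
    [/\ gamma 0%N = a, gamma k = b,
        (forall i, (i <= k)%N -> M (gamma i) = M a) &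
        (forall i, (0 < i <= k)%N -> indv_step (gamma i - gamma i.-1))].

Section FlockWalk.

Variables (E : finType) (M : {ffun E -> int} -> {set {set E}}).

Lemma flock_walk_refl a : flock_walk M a a.
Proof. by exists 0%N, (fun=> a); split=> // i; rewrite ltnNge andNb. Qed.

Lemma flock_walk_cons a g b :
  M g = M a -> indv_step (g - a) -> flock_walk M g b -> flock_walk M a b.
Proof.
move=> Mga step [k [gamma [g0 gk Mgamma steps]]].
exists k.+1, (fun i => if i is i'.+1 then gamma i' else a); split=> //.
  by case=> // i /Mgamma; rewrite Mga.
by case=> // -[_ | i ik]; [rewrite g0 | exact: (steps i.+1)].
Qed.

Lemma flock_walk_rcons a g b :
  M b = M a -> indv_step (b - g) -> flock_walk M a g -> flock_walk M a b.
Proof.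
move=> Mba step [k [gamma [g0 gk Mgamma steps]]].
exists k.+1, (fun i => if (i <= k)%N then gamma i else b); split=> //=.
- by rewrite ltnn.
- by move=> i _; case: ifP => // /Mgamma.
move=> i /andP[i_gt0 ile]; case: (leqP i k) => [lei | ltki].
  by rewrite (leq_trans (leq_pred i) lei); apply: steps; rewrite i_gt0.
have -> : i = k.+1 by apply/eqP; rewrite eqn_leq ile.
by rewrite /= leqnn gk.
Qed.

End FlockWalk.

Lemma ltn_sum_absz (I : finType) (f g : I -> int) j :
  (forall k, `|g k| <= `|f k|)%N -> (`|g j| < `|f j|)%N ->
  (\sum_k `|g k| < \sum_k `|f k|)%N.
Proof.
move=> le_gf lt_gfj; rewrite (bigD1 j) // [X in (_ < X)%N](bigD1 j) //= -addSn.
by rewrite leq_add // leq_sum.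
Qed.

Definition l1dist (E : finType) (a b : {ffun E -> int}) : nat := \sum_j `|b j - a j|%N.

Lemma l1distC (E : finType) (a b : {ffun E -> int}) : l1dist a b = l1dist b a.
Proof. by apply: eq_bigr => j _; rewrite -abszN opprB. Qed.

Section Flock.

Variables (E : finType) (d : nat) (M : {ffun E -> int} -> {set {set E}}).
Hypothesis flockM : is_matroid_flock d M.

Lemma flock_matroid a : is_matroid_rank d (M a).
Proof. by case: flockM. Qed.

Lemma flock_contract_delete a i : mcontract (M a) i = mdelete (M (a + unitv i)) i.
Proof. by case: flockM => _ []. Qed.

Lemma flock_shift a (c : int) : M (a + [ffun=> c]) = M a.
Proof.
have shiftn (n : nat) b : M (b + [ffun=> n%:Z]) = M b.
  elim: n => [|n IHn]; first by congr M; apply/ffunP => j; rewrite !ffunE addr0.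
  rewrite -[RHS]IHn [RHS](proj2 (proj2 flockM)); congr M.
  by apply/ffunP => j; rewrite !ffunE inE; lia.
case: c => n; first exact: shiftn.
by rewrite -(shiftn n.+1); congr M; apply/ffunP => j; rewrite !ffunE NegzE subrK.
Qed.

Lemma mrank_flock_unit_in a i (X : {set E}) : i \in X ->
  (mrank (M a) X <= mrank (M (a + unitv i)%R) X)%N.
Proof.
exact: (mrank_contract_delete_in (flock_matroid a) (flock_matroid (a + unitv i))
  (flock_contract_delete a i)).
Qed.

Lemma mrank_flock_unit_notin a i (X : {set E}) : i \notin X ->
  (mrank (M (a + unitv i)%R) X <= mrank (M a) X)%N.
Proof.
exact: (mrank_contract_delete_notin (flock_matroid a) (flock_matroid (a + unitv i))
  (flock_contract_delete a i)).
Qed.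

Lemma mrank_flock_mono a (v : {ffun E -> int}) (X : {set E}) :
  (forall j, j \in X -> 0 <= v j) -> (forall j, j \notin X -> v j <= 0) ->
  (mrank (M a) X <= mrank (M (a + v)%R) X)%N.
Proof.
have [n] := ubnP (\sum_j `|v j|)%N; elim: n v => // n IH v ltvn Xv X'v.
have [-> | nz_v] := eqVneq v 0; first by rewrite addr0.
have [j vj0] : exists j, v j != 0.
  case: (pickP (fun j => v j != 0)) => [j vj0 | v0]; first by exists j.
  by case/eqP: nz_v; apply/ffunP => j; rewrite ffunE; apply/eqP/negbFE/v0.
have IHj (v' : {ffun E -> int}) : (forall k, k != j -> v' k = v k) ->
    (0 <= v' j < v j) \/ (v j < v' j <= 0) -> (mrank (M a) X <= mrank (M (a + v')%R) X)%N.
  move=> eqv' v'j; apply: IH => [|k|k].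
  - apply: leq_trans (ltnSE ltvn); apply: (ltn_sum_absz (j := j)) => [k|]; last by lia.
    by have [->|/eqv'->] := eqVneq k j; lia.
  - by have [->|/eqv'->] := eqVneq k j => /Xv; lia.
  - by have [->|/eqv'->] := eqVneq k j => /X'v; lia.
have [vj_gt0 | vj_le0] := ltP 0 (v j).
  have Xj : j \in X by apply: contraLR vj_gt0 => /X'v; lia.
  apply: leq_trans (IHj (v - unitv j) _ _) _.
  - by move=> k; rewrite !ffunE => /negbTE ->; rewrite subr0.
  - by rewrite !ffunE eqxx /=; lia.
  by rewrite -[a + v](subrK (unitv j)) addrA mrank_flock_unit_in.
have X'j : j \notin X by apply: contraL vj0 => /Xv; lia.
apply: leq_trans (IHj (v + unitv j) _ _) _.
- by move=> k; rewrite !ffunE => /negbTE ->; rewrite addr0.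
- by rewrite !ffunE eqxx /=; lia.
by rewrite addrA mrank_flock_unit_notin.
Qed.

Lemma mrank_flock_le (a c : {ffun E -> int}) (k : int) (X : {set E}) :
  (forall j, j \in X -> k <= c j - a j) -> (forall j, j \notin X -> c j - a j <= k) ->
  (mrank (M a) X <= mrank (M c) X)%N.
Proof.
move=> geX leX'; have -> : M c = M (a + [ffun j => c j - a j - k]).
  rewrite -[RHS](flock_shift _ k); congr M; apply/ffunP => j.
  by rewrite !ffunE -addrA subrK addrC subrK.
apply: mrank_flock_mono => j; rewrite ffunE; [move/geX | move/leX']; lia.
Qed.

Lemma mrank_flock_indv a (J Y : {set E}) : Y \subset ~: J ->
  (mrank (M (a + indv J)%R) Y + mrank (M a) J = mrank (M a) (Y :|: J))%N.
Proof.
have [n] := ubnP #|J|; elim: n J Y => // n IH J Y ltJn sYJ'.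
have [-> | [j Jj]] := set_0Vmem J.
  have -> : indv set0 = 0 :> {ffun E -> int} by apply/ffunP => x; rewrite !ffunE inE.
  by rewrite addr0 mrank0 setU0 addn0.
have ltJ'n : (#|J :\ j| < n)%N by rewrite (cardsD1 j) Jj in ltJn.
have Y'j : j \notin Y by apply: contraTN Jj => /(subsetP sYJ'); rewrite inE.
have -> : a + indv J = a + indv (J :\ j) + unitv j.
  apply/ffunP => x; rewrite !ffunE !inE -addrA.
  by case: (x =P j) => [->|_] /=; rewrite ?Jj ?addr0.
have := mrank_contract_delete_setU1 (flock_matroid (a + indv (J :\ j)))
  (flock_matroid (a + indv (J :\ j) + unitv j)) (flock_contract_delete _ j) Y'j.
have IHj : (mrank (M (a + indv (J :\ j))%R) [set j] + mrank (M a) (J :\ j) =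
            mrank (M a) J)%N.
  by rewrite IH ?setD1K // sub1set !inE eqxx.
have IHjY : (mrank (M (a + indv (J :\ j))%R) (j |: Y) + mrank (M a) (J :\ j) =
             mrank (M a) (Y :|: J))%N.
  rewrite IH //; last first.
    by rewrite subUset sub1set !inE eqxx (subset_trans sYJ') // setCS subD1set.
  by rewrite setUAC setD1K // setUC.
lia.
Qed.

Lemma flock_indv_eq (a : {ffun E -> int}) (J : {set E}) :
  (forall Z : {set E}, Z \subset J -> mrank (M (a + indv J)%R) Z = mrank (M a) Z) ->
  mrank (M (a + indv J)%R) (~: J) = mrank (M a) (~: J) ->
  M (a + indv J) = M a.
Proof.
move=> eqJ eqJ'.
have sep_a : separator (M a) J.
  by rewrite /separator -eqJ' addnC mrank_flock_indv // setUC setUCr.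
have sep_g : separator (M (a + indv J)) J.
  by rewrite /separator eqJ // eqJ' sep_a !(mrankT (flock_matroid _)).
have eq_off X : mrank (M (a + indv J)) (X :&: ~: J) = mrank (M a) (X :&: ~: J).
  have := mrank_flock_indv a (subsetIr X (~: J)).
  by rewrite (mrank_separatorU (flock_matroid a) sep_a (subsetIr _ _) (subxx J)); lia.
apply: (mrank_inj (flock_matroid _) (flock_matroid _)) => X.
rewrite -(setID X (~: J)) setDE setCK.
rewrite (mrank_separatorU (flock_matroid _) sep_g (subsetIr _ _) (subsetIr _ _)).
rewrite (mrank_separatorU (flock_matroid a) sep_a (subsetIr _ _) (subsetIr _ _)).
by rewrite eq_off eqJ ?subsetIr.
Qed.

Lemma flock_argmax_step (a b : {ffun E -> int}) (R : int) :
  M a = M b -> (forall j, b j - a j <= R) -> M (a + indv [set j | b j - a j == R]) = M a.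
Proof.
move=> Mab leR; set J := [set j | _].
have inJ j : (j \in J) = (b j - a j == R) by rewrite inE.
apply: flock_indv_eq => [Z sZJ|]; apply/eqP; rewrite eqn_leq; apply/andP; split.
- rewrite Mab; apply: (mrank_flock_le (k := R - 1)) => j; rewrite !ffunE.
    by move/(subsetP sZJ) => Jj; rewrite Jj; move: Jj; rewrite inJ => /eqP /=; lia.
  by rewrite inJ; have := leR j; case: eqP => /=; lia.
- apply: (mrank_flock_le (k := 1)) => j; rewrite !ffunE.
    by move/(subsetP sZJ) => -> /=; lia.
  by case: (j \in J) => /=; lia.
- apply: (mrank_flock_le (k := 0)) => j; rewrite !ffunE !inE -/J.
    by move/negbTE => -> /=; lia.
  by rewrite negbK => -> /=; lia.
- rewrite Mab; apply: (mrank_flock_le (k := 1 - R)) => j; rewrite !ffunE !inE.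
    by move=> neR; rewrite (negbTE neR) /=; have := leR j; move/eqP: neR; lia.
  by rewrite negbK => /eqP eqR; rewrite eqR eqxx /=; lia.
Qed.

Lemma flock_step_toward a b : M a = M b -> [exists j, a j < b j] ->
  exists J, M (a + indv J) = M a /\ (l1dist (a + indv J)%R b < l1dist a b)%N.
Proof.
move=> Mab /existsP[j1 lt1].
have [j0 _ maxj0] := arg_maxP (fun j => b j - a j) (isT : predT j1).
set R := b j0 - a j0; exists [set j | b j - a j == R]; split.
  by apply: flock_argmax_step => // j; apply: maxj0.
have := maxj0 j1 isT; rewrite /= -/R => R_gt0.
apply: (ltn_sum_absz (j := j0)) => [k|]; rewrite !ffunE inE.
  by have := maxj0 k isT; case: eqP => /=; lia.
by rewrite eqxx /=; lia.
Qed.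

Lemma flock_walk_exists a b : M a = M b -> flock_walk M a b.
Proof.
have [n] := ubnP (l1dist a b); elim: n a b => // n IH a b ltabn Mab.
have [up | /existsPn noup] := boolP [exists j, a j < b j].
  have [J [MaJ ltJ]] := flock_step_toward Mab up.
  apply: (flock_walk_cons MaJ); first by exists J; left; rewrite addrAC subrr add0r.
  by apply: IH; [exact: leq_trans ltJ (ltnSE ltabn) | rewrite MaJ].
have [down | /existsPn nodown] := boolP [exists j, b j < a j].
  have [J [MbJ ltJ]] := flock_step_toward (esym Mab) down.
  apply: (flock_walk_rcons (g := b + indv J)); first by rewrite Mab.
    by exists J; right; rewrite opprD addrA subrr add0r.
  apply: IH; last by rewrite MbJ.
  by rewrite l1distC; rewrite l1distC in ltabn; exact: leq_trans ltJ (ltnSE ltabn).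
suff -> : b = a by apply: flock_walk_refl.
by apply/ffunP => j; have := noup j; have := nodown j; lia.
Qed.

End Flock.

Theorem mainTheorem16 (E : finType) (d : nat)
    (M : {ffun E -> int} -> {set {set E}}) :
  is_matroid_flock d M ->
  forall alpha beta : {ffun E -> int}, M alpha = M beta ->
  exists (k : nat) (gamma : nat -> {ffun E -> int}),
    [/\ gamma 0%N = alpha, gamma k = beta,
        (forall i, (i <= k)%N -> M (gamma i) = M alpha) &
        (forall i, (0 < i <= k)%N -> exists J : {set E},
           gamma i - gamma i.-1 = indv J \/ gamma i - gamma i.-1 = - indv J)].
Proof. by move=> flockM alpha beta; apply: (flock_walk_exists flockM). Qed.
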